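(* Let $T$ be a doubled graph in $\mathcal F$ that contains no antihole of length six. Then: (1) $T$ is either complete or has an even pair; (2) if $T$ is favorable, then $T$ has an even pair disjoint from its switchable component.
   Context: A trigraph $T$ consists of a finite set $V(T)$ and a map $\theta:\binom{V(T)}{2}\to\{-1,0,1\}$. Two distinct vertices $u,v$ are strongly adjacent if $\theta(uv)=1$, strongly antiadjacent if $\theta(uv)=-1$, and semiadjacent (a switchable pair) if $\theta(uv)=0$; they are adjacent if $\theta(uv)\in\{0,1\}$ and antiadjacent if $\theta(uv)\in\{0,-1\}$. $N(v)$ is the set of vertices adjacent to $v$. An edge (antiedge) is an adjacent (antiadjacent) pair; a strong edge (strong antiedge) is a strongly adjacent (strongly antiadjacent) pair. The complement $\overline T$ has vertex set $V(T)$ and adjacency function $-\theta$. For $X\subseteq V(T)$, $T|X$ is the trigraph on $X$ with $\theta$ restricted, and $T\setminus X=T|(V(T)\setminus X)$; $T$ contains $H$ if $H$ is isomorphic to some $T|X$. A clique is a set of pairwise adjacent vertices; $T$ is complete if $V(T)$ is a clique. A set $X$ is connected if the graph on $X$ whose edges are the adjacent pairs of $T|X$ is connected, and anticonnected if the graph on $X$ whose edges are the antiadjacent pairs of $T|X$ is connected; components (anticomponents) are maximal connected (anticonnected) subsets. A path is a sequence of distinct vertices $p_1,\dots,p_k$ such that $p_i,p_j$ are adjacent when $|i-j|=1$ and antiadjacent when $|i-j|>1$; its length is $k-1$. A hole of length $k\ge5$ consists of vertices $h_1,\dots,h_k$ with $h_i,h_j$ adjacent if $|i-j|\in\{1,k-1\}$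 and antiadjacent otherwise; an antihole is an induced subtrigraph whose complement is a hole of $\overline T$ (length = number of vertices). $T$ is Berge if it contains no hole of odd length and no antihole of odd length. An even pair of $T$ is a strongly antiadjacent pair $\{u,v\}$ such that every path from $u$ to $v$ in $T$ has even length. $\Sigma(T)$ is the graph on $V(T)$ whose edges are the switchable pairs of $T$; a switchable component is a connected component of $\Sigma(T)$ with at least two vertices. $\mathcal F$ is the class of Berge trigraphs $T$ such that: (1) $T$ has at most one switchable component, and it has at most two edges; (2) if the switchable component has exactly one edge $xy$, then $N(x)\cap N(y)=\emptyset$ (it is called small); (3) if it has two edges, with $v$ the vertex of degree two in $\Sigma(T)$ and $x,y$ its neighbours, then $v$ is strongly anticomplete to $V(T)\setminus\{v,x,y\}$, $x$ is strongly antiadjacent to $y$, and $N(x)\cap N(y)=\{v\}$ (it is called light). For $T\in\mathcal F$, $D$ denotes the vertex set of its switchable component ($D=\emptyset$ if $T$ has no switchable pair). A pair $\{u,v\}$ is disjoint from the switchable component if $\{u,v\}\cap D=\emptyset$. A trigraph $T\in\mathcal F$ is favorable if (1) $|V(T)|\ge5$; (2) $T$ has a strongly antiadjacent pair $\{u,v\}$ disjoint from $D$; and (3) if $D=\{x,y\}$ is small, then at least one of $V(T)\setminus(D\cup N(x))$, $V(T)\setminus(D\cup N(y))$ is not a clique. A good partition of $T$ is a partition $(X,Y)$ of $V(T)$ such that every component of $T|X$ and every anticomponent of $T|Y$ has at most two vertices, no switchable pair has one end in $X$ and the other in $Y$, and for every component $C_x$ of $T|X$ and every anticomponent $C_y$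 of $T|Y$, every vertex of $C_x\cup C_y$ is incident with at most one strong edge and at most one strong antiedge between $C_x$ and $C_y$. $T$ is a doubled graph if it has a good partition. *)

From HB Require Import structures.
From mathcomp Require Import all_boot.
Set Implicit Arguments. Unset Strict Implicit. Unset Printing Implicit Defensive.

(* The three values of the adjacency function theta : Strong = 1, Semi = 0, Anti = -1. *)
Inductive adjv := Strong | Semi | Anti.

Definition adjv_eqb (a b : adjv) : bool :=
  match a, b with
  | Strong, Strong | Semi, Semi | Anti, Anti => true | _, _ => false end.
Lemma adjv_eqP : Equality.axiom adjv_eqb.
Proof. by case; case; constructor. Qed.
HB.instance Definition _ := hasDecEq.Build adjv adjv_eqP.

(* A trigraph is a finite type T with a symmetric map th : T -> T -> adjv
   (values on the diagonal are irrelevant: every notion requires distinctness). *)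
Section Trigraph.
Variables (T : finType) (th : T -> T -> adjv).

Definition sadj (u v : T) : bool := (u != v) && (th u v == Strong).
Definition santi (u v : T) : bool := (u != v) && (th u v == Anti).
Definition semi (u v : T) : bool := (u != v) && (th u v == Semi).
Definition adj (u v : T) : bool := (u != v) && (th u v != Anti).
Definition anti (u v : T) : bool := (u != v) && (th u v != Strong).

Definition nbhd (v : T) : {set T} := [set u | adj v u].

Definition clique (X : {set T}) : Prop :=
  forall u v, u \in X -> v \in X -> u != v -> adj u v.

Definition complete : Prop := clique [set: T].

Definition is_path (p : seq T) : Prop :=
  uniq p /\
  forall (d : T) (i j : nat), i < j -> j < size p ->
    (j = i.+1 -> adj (nth d p i) (nth d p j)) /\
    (i.+1 < j -> anti (nth d p i) (nth d p j)).

Definition path_len (p : seq T) : nat := (size p).-1.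

Definition path_from_to (p : seq T) (u v : T) : Prop :=
  is_path p /\ head u p = u /\ last u p = v /\ 0 < size p.

Definition is_hole (h : seq T) (k : nat) : Prop :=
  size h = k /\ 5 <= k /\ uniq h /\
  forall (d : T) (i j : nat), i < j -> j < k ->
    if (j - i == 1) || (j - i == k - 1)
    then adj (nth d h i) (nth d h j) else anti (nth d h i) (nth d h j).

(* Antihole of length k: its complement (theta negated, which swaps
   adjacent/antiadjacent) is a hole of length k. *)
Definition is_antihole (h : seq T) (k : nat) : Prop :=
  size h = k /\ 5 <= k /\ uniq h /\
  forall (d : T) (i j : nat), i < j -> j < k ->
    if (j - i == 1) || (j - i == k - 1)
    then anti (nth d h i) (nth d h j) else adj (nth d h i) (nth d h j).

Definition has_antihole (k : nat) : Prop := exists h, is_antihole h k.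

Definition berge : Prop :=
  (forall h k, is_hole h k -> ~~ odd k) /\ (forall h k, is_antihole h k -> ~~ odd k).

(* Switchable components: components of Sigma(T) with at least two vertices *)
Definition scomp (x : T) : {set T} := [set y | connect semi x y].
Definition swcomp (C : {set T}) : Prop := exists x, C = scomp x /\ 1 < #|C|.
Definition nedges (C : {set T}) : nat :=
  #|[set p : T * T | (p.1 \in C) && (p.2 \in C) && semi p.1 p.2]| %/ 2.
Definition Dset : {set T} := [set x | 1 < #|scomp x|].

Definition inF : Prop :=
  berge /\
  (forall C1 C2, swcomp C1 -> swcomp C2 -> C1 = C2) /\
  (forall C, swcomp C -> nedges C <= 2) /\
  (forall C x y, swcomp C -> nedges C = 1 -> x \in C -> semi x y ->
     nbhd x :&: nbhd y = set0) /\
  (forall C v x y, swcomp C -> nedges C = 2 -> v \in C ->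
     semi v x -> semi v y -> x != y ->
     (forall w, w \notin [set v; x; y] -> santi v w) /\ santi x y /\
     nbhd x :&: nbhd y = [set v]).

Definition favorable : Prop :=
  inF /\ 5 <= #|T| /\
  (exists u v, santi u v /\ u \notin Dset /\ v \notin Dset) /\
  (forall x y, semi x y -> nedges (scomp x) = 1 ->
     ~ clique (~: (Dset :|: nbhd x)) \/ ~ clique (~: (Dset :|: nbhd y))).

Definition even_pair (u v : T) : Prop :=
  santi u v /\ forall p, path_from_to p u v -> ~~ odd (path_len p).

Definition rel_in (X : {set T}) (r : T -> T -> bool) : rel T :=
  fun a b => [&& r a b, a \in X & b \in X].
Definition compX (X : {set T}) (x : T) : {set T} := [set y | connect (rel_in X adj) x y].
Definition acompY (Y : {set T}) (y : T) : {set T} := [set z | connect (rel_in Y anti) y z].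

Definition good_partition (X Y : {set T}) : Prop :=
  [disjoint X & Y] /\ X :|: Y = [set: T] /\
  (forall x, x \in X -> #|compX X x| <= 2) /\
  (forall y, y \in Y -> #|acompY Y y| <= 2) /\
  (forall a b, semi a b -> ~ (a \in X /\ b \in Y)) /\
  (forall x y, x \in X -> y \in Y ->
     let Cx := compX X x in let Cy := acompY Y y in
     (forall w, w \in Cx ->
        #|[set z in Cy | sadj w z]| <= 1 /\ #|[set z in Cy | santi w z]| <= 1) /\
     (forall w, w \in Cy ->
        #|[set z in Cx | sadj w z]| <= 1 /\ #|[set z in Cx | santi w z]| <= 1)).

Definition doubled : Prop := exists X Y, good_partition X Y.

End Trigraph.

From Pilot Require Import Defs.
From mathcomp Require Import all_boot.
From Stdlib Require Import Classical.
From mathcomp Require Import zify.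
Set Implicit Arguments. Unset Strict Implicit. Unset Printing Implicit Defensive.

(* We fix a good partition (X, Y).  Its conditions say that X induces no path
   on three vertices, Y no antipath on three vertices, switchable pairs do not
   cross the partition, every vertex of X is adjacent to exactly one end of each
   antiedge of Y and every vertex of Y to exactly one end of each edge of X.
   From these we derive four criteria for even pairs (even_pair_XY,
   even_pair_YY, even_pair_XY_antiedge, even_pair_XX): an odd path between the
   two ends would either have three consecutive vertices in X or break one of
   the matching conditions.  An edge of X and two disjoint antiedges of Y span
   an antihole of length six, so, unless Y has a strong antiedge while X is
   stable (where even_pair_YY applies), T|Y has at most one anticomponent with
   two vertices.  A case analysis on the position of strong antiedges then
   yields both statements; in the favorable case D is a single switchable pair
   inside X or inside Y, and the non-clique condition provides the strong
   antiedge from which the even pair is built. *)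

(* Linear arithmetic on the natural-number hypotheses only: the many boolean
   trigraph hypotheses in path arguments make [lia]'s preprocessing very slow. *)
Ltac arith :=
  repeat match goal with H : ?t |- _ =>
    tryif lazymatch t with
      | is_true (leq _ _) => idtac
      | is_true (~~ (?a == _)) => let ty := type of a in constr_eq ty nat
      | (?a = _) => let ty := type of a in constr_eq ty nat
      end
    then fail else clear H
  end; lia.

Lemma card_gt1 (U : finType) (S : {set U}) a b :
  a != b -> a \in S -> b \in S -> 1 < #|S|.
Proof.
move=> ab aS bS; rewrite (cardsD1 a) aS (cardsD1 b) !inE eq_sym ab bS.
by rewrite add1n.
Qed.

Lemma card_gt2 (U : finType) (S : {set U}) a b c :
  a != b -> b != c -> a != c -> a \in S -> b \in S -> c \in S -> 2 < #|S|.
Proof.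
move=> ab bc ac aS bS cS; rewrite (cardsD1 a) aS (cardsD1 b) !inE eq_sym ab bS.
by rewrite (cardsD1 c) !inE (eq_sym c b) bc (eq_sym c a) ac cS.
Qed.

Section Trigraph.
Variables (T : finType) (th : T -> T -> adjv).
Hypothesis th_sym : forall u v, th u v = th v u.

Local Notation adj := (adj th).
Local Notation anti := (anti th).
Local Notation sadj := (sadj th).
Local Notation santi := (santi th).
Local Notation semi := (semi th).

Lemma adj_sym u v : adj u v = adj v u.
Proof. by rewrite /Defs.adj eq_sym th_sym. Qed.
Lemma anti_sym u v : anti u v = anti v u.
Proof. by rewrite /Defs.anti eq_sym th_sym. Qed.
Lemma santi_sym u v : santi u v = santi v u.
Proof. by rewrite /Defs.santi eq_sym th_sym. Qed.
Lemma sadj_sym u v : sadj u v = sadj v u.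
Proof. by rewrite /Defs.sadj eq_sym th_sym. Qed.
Lemma semi_sym u v : semi u v = semi v u.
Proof. by rewrite /Defs.semi eq_sym th_sym. Qed.

(* The five relations are determined by [u != v] and the value [th u v];
   the following lemmas record how they relate. *)
Ltac trigraph_cases :=
  move=> ? ?; rewrite /Defs.adj /Defs.anti /Defs.sadj /Defs.santi /Defs.semi;
  by case: (th _ _) => /=; case: (_ != _).

Lemma adj_neq u v : adj u v -> u != v.  Proof. by case/andP. Qed.
Lemma anti_neq u v : anti u v -> u != v. Proof. by case/andP. Qed.
Lemma semi_neq u v : semi u v -> u != v. Proof. by case/andP. Qed.
Lemma santi_neq u v : santi u v -> u != v. Proof. by case/andP. Qed.

Lemma santi_nadj : forall u v, santi u v -> ~~ adj u v.    Proof. trigraph_cases. Qed.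
Lemma santi_anti : forall u v, santi u v -> anti u v.      Proof. trigraph_cases. Qed.
Lemma semi_adj : forall u v, semi u v -> adj u v.          Proof. trigraph_cases. Qed.
Lemma semi_anti : forall u v, semi u v -> anti u v.        Proof. trigraph_cases. Qed.
Lemma semi_nsanti : forall u v, semi u v -> ~~ santi u v.  Proof. trigraph_cases. Qed.
Lemma sadj_nanti : forall u v, sadj u v -> ~~ anti u v.    Proof. trigraph_cases. Qed.
Lemma adj_nsanti : forall u v, adj u v -> ~~ santi u v.    Proof. trigraph_cases. Qed.
Lemma nadj_santi : forall u v, u != v -> ~~ adj u v -> santi u v. Proof. trigraph_cases. Qed.
Lemma nadj_anti : forall u v, u != v -> ~~ adj u v -> anti u v.   Proof. trigraph_cases. Qed.
Lemma nanti_adj : forall u v, u != v -> ~~ anti u v -> adj u v.   Proof. trigraph_cases. Qed.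
Lemma anti_semi : forall u v, anti u v -> ~~ santi u v -> semi u v. Proof. trigraph_cases. Qed.

Lemma in_Dset z : z \in Dset th <-> exists w, semi z w.
Proof.
rewrite inE; split=> [zD|[w szw]]; last first.
  by apply: (card_gt1 (semi_neq szw)); rewrite inE (connect0, connect1 szw).
apply: NNPP => nw.
have : scomp th z \subset [set z].
  apply/subsetP => y; rewrite !inE => /connectP [[|w s] /=]; first by move=> _ ->.
  by case/andP=> szw _; case: nw; exists w.
by move/subset_leq_card; rewrite cards1 leqNgt zD.
Qed.

Definition ipath (q : nat -> T) (k : nat) : Prop :=
  [/\ forall i, i < k -> adj (q i) (q i.+1),
      forall i j, i.+1 < j -> j <= k -> anti (q i) (q j)
    & forall i j, i <= k -> j <= k -> q i = q j -> i = j].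

Lemma even_pairP u v : santi u v ->
  (forall q k, ipath q k -> q 0 = u -> q k = v -> ~~ odd k) -> even_pair th u v.
Proof.
move=> suv noodd; split=> // p [[up Hp] [hp [lp p0]]].
rewrite /path_len; apply: noodd (nth u p) _ _ _ _.
- split.
  + by move=> i ik; apply: (Hp u i i.+1 (ltnSn i) ltac:(arith)).1.
  + by move=> i j ij jk; apply: (Hp u i j ltac:(arith) ltac:(arith)).2.
  + move=> i j ik jk e; apply/eqP.
    have ip : i < size p by arith.
    have jp : j < size p by arith.
    by rewrite -(nth_uniq u ip jp up) e.
- by case: p hp p0 {Hp up lp}.
- by rewrite nth_last.
Qed.

Lemma ipath_chord q k i j : ipath q k -> i < j -> j <= k -> ~~ anti (q i) (q j) ->
  j = i.+1.
Proof.
case=> _ Hn _ ij jk na; case: (ltngtP i.+1 j) => // h; last by arith.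
by rewrite (Hn i j h jk) in na.
Qed.

Lemma ipath_neq q k i j : ipath q k -> i <= k -> j <= k -> i != j -> q i != q j.
Proof. by case=> _ _ Hu ik jk; apply: contra => /eqP /(Hu i j ik jk) ->. Qed.

Lemma ipath_odd_ge3 q k : ipath q k -> santi (q 0) (q k) -> odd k -> 3 <= k.
Proof.
case=> Ha _ _; case: k Ha => [|[|[|k]]] Ha // s _.
by move: (Ha 0 isT) => /adj_nsanti; rewrite s.
Qed.

Lemma antihole6 x b a x' c d :
  anti x b -> adj x a -> adj x x' -> adj x c -> anti x d ->
  anti b a -> adj b x' -> adj b c -> adj b d ->
  anti a x' -> adj a c -> adj a d ->
  anti x' c -> adj x' d -> anti c d -> has_antihole th 6.
Proof.
move=> H01 H02 H03 H04 H05 H12 H13 H14 H15 H23 H24 H25 H34 H35 H45.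
exists [:: x; b; a; x'; c; d]; split; [by [] | split; [by [] | split]].
  rewrite /= !inE !negb_or (anti_neq H01) (adj_neq H02) (adj_neq H03) (adj_neq H04).
  rewrite (anti_neq H05) (anti_neq H12) (adj_neq H13) (adj_neq H14) (adj_neq H15).
  rewrite (anti_neq H23) (adj_neq H24) (adj_neq H25) (anti_neq H34).
  by rewrite (adj_neq H35) (anti_neq H45).
move=> d0 i j ij j6.
by case: i ij => [|[|[|[|[|[|i]]]]]] ij; case: j ij j6 => [|[|[|[|[|[|j]]]]]] ij j6.
Qed.

Definition even_pair_off_D : Prop :=
  exists u v, even_pair th u v /\ u \notin Dset th /\ v \notin Dset th.

Lemma nonclique_off_D r : ~ clique th (~: (Dset th :|: nbhd th r)) ->
  exists s t, [/\ s \notin Dset th, t \notin Dset th, ~~ adj r s, ~~ adj r t & santi s t].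
Proof.
move=> nc; apply: NNPP => H; apply: nc => s t.
rewrite !in_setC !in_setU ![_ \in nbhd _ _]inE !negb_or => /andP[sD rs] /andP[tD rt] st.
by apply: contraT => nst; case: H; exists s, t; split=> //; apply: nadj_santi.
Qed.

Section GoodPartition.
Variables X Y : {set T}.
Hypothesis gp : good_partition th X Y.

Lemma in_XorY z : (z \in X) \/ (z \in Y).
Proof.
case: gp => _ [XUY _]; have : z \in X :|: Y by rewrite XUY inE.
by rewrite inE => /orP[]; [left|right].
Qed.

Lemma notXY z : z \in X -> z \in Y -> False.
Proof. by case: gp => dXY _ zX; rewrite (disjointFr dXY zX). Qed.

Lemma XY_neq x y : x \in X -> y \in Y -> x != y.
Proof. by move=> xX yY; apply/eqP => e; apply: (notXY xX); rewrite e. Qed.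

(* Switchable pairs do not cross the partition, so adjacency between X and Y
   is strong adjacency and antiadjacency is strong antiadjacency. *)
Lemma XY_nsemi x y : x \in X -> y \in Y -> ~~ semi x y.
Proof. by case: gp => _ [_ [_ [_ [Hs _]]]] xX yY; apply/negP => /Hs; case. Qed.

Lemma XY_sadj x y : x \in X -> y \in Y -> adj x y -> sadj x y.
Proof.
move=> xX yY; move: (XY_nsemi xX yY).
by rewrite /Defs.semi /Defs.adj /Defs.sadj; case: (th x y); case: (x != y).
Qed.

Lemma XY_adj x y : x \in X -> y \in Y -> adj x y -> ~~ anti x y.
Proof. by move=> xX yY /(XY_sadj xX yY) /sadj_nanti. Qed.

Lemma XY_anti x y : x \in X -> y \in Y -> anti x y -> ~~ adj x y.
Proof. by move=> xX yY; apply: contraL; apply: XY_adj. Qed.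

Lemma XY_santi x y : x \in X -> y \in Y -> ~~ adj x y -> santi x y.
Proof. by move=> xX yY; apply: nadj_santi; apply: XY_neq. Qed.

Let compX_edge x z : x \in X -> z \in X -> adj x z -> z \in compX th X x.
Proof. by move=> xX zX xz; rewrite inE connect1 // /rel_in xz xX zX. Qed.
Let acompY_antiedge y z : y \in Y -> z \in Y -> anti y z -> z \in acompY th Y y.
Proof. by move=> yY zY yz; rewrite inE connect1 // /rel_in yz yY zY. Qed.
Let compX_self x : x \in compX th X x. Proof. by rewrite inE connect0. Qed.
Let acompY_self y : y \in acompY th Y y. Proof. by rewrite inE connect0. Qed.

(* Components of T|X have at most two vertices: X induces no path on three
   vertices; dually, Y induces no antipath on three vertices. *)
Lemma X_noP3 a b c : a \in X -> b \in X -> c \in X -> adj a b -> adj b c -> a != c ->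
  False.
Proof.
move=> aX bX cX ab bc ac; case: gp => _ [_ [HX _]].
have := card_gt2 (adj_neq ab) (adj_neq bc) ac (compX_edge bX aX _) (compX_self b)
  (compX_edge bX cX bc).
by rewrite ltnNge HX // adj_sym => /(_ ab).
Qed.

Lemma Y_noP3 a b c : a \in Y -> b \in Y -> c \in Y -> anti a b -> anti b c -> a != c ->
  False.
Proof.
move=> aY bY cY ab bc ac; case: gp => _ [_ [_ [HY _]]].
have := card_gt2 (anti_neq ab) (anti_neq bc) ac (acompY_antiedge bY aY _) (acompY_self b)
  (acompY_antiedge bY cY bc).
by rewrite ltnNge HY // anti_sym => /(_ ab).
Qed.

(* The matching condition between a component of T|X and an anticomponent of
   T|Y: a vertex of X is adjacent to exactly one end of an antiedge of Y ... *)
Lemma cross_antiedge x y y' : x \in X -> y \in Y -> y' \in Y -> anti y y' ->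
  adj x y' = ~~ adj x y.
Proof.
move=> xX yY y'Y yy'; case: gp => _ [_ [_ [_ [_ Hc]]]].
have [Hs Ha] := (Hc x y xX yY).1 x (compX_self x).
have iy := acompY_self y; have iy' := acompY_antiedge yY y'Y yy'.
case A1: (adj x y); case A2: (adj x y') => //=; exfalso.
- have := card_gt1 (S := [set z in acompY th Y y | sadj x z]) (anti_neq yy').
  by rewrite in_set iy in_set iy' !XY_sadj // ltnNge Hs => /(_ isT isT).
- have := card_gt1 (S := [set z in acompY th Y y | santi x z]) (anti_neq yy').
  by rewrite in_set iy in_set iy' !XY_santi ?A1 ?A2 // ltnNge Ha => /(_ isT isT).
Qed.

(* ... and a vertex of Y is adjacent to exactly one end of an edge of X. *)
Lemma cross_edge y x x' : y \in Y -> x \in X -> x' \in X -> adj x x' ->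
  adj x' y = ~~ adj x y.
Proof.
move=> yY xX x'X xx'; case: gp => _ [_ [_ [_ [_ Hc]]]].
have [Hs Ha] := (Hc x y xX yY).2 y (acompY_self y).
have ix := compX_self x; have ix' := compX_edge xX x'X xx'.
case A1: (adj x y); case A2: (adj x' y) => //=; exfalso.
- have := card_gt1 (S := [set z in compX th X x | sadj y z]) (adj_neq xx').
  by rewrite in_set ix in_set ix' !(sadj_sym y) !XY_sadj // ltnNge Hs => /(_ isT isT).
- have := card_gt1 (S := [set z in compX th X x | santi y z]) (adj_neq xx').
  rewrite in_set ix in_set ix' !(santi_sym y) !XY_santi ?A1 ?A2 //.
  by rewrite ltnNge Ha => /(_ isT isT).
Qed.

Definition single_Y (y : T) : Prop := forall c, c \in Y -> c != y -> ~~ anti c y.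

Definition stable_X : Prop := forall x z, x \in X -> z \in X -> ~~ adj x z.

Lemma ipath_noX3 q k i : ipath q k -> i.+2 <= k ->
  q i \in X -> q i.+1 \in X -> q i.+2 \in X -> False.
Proof.
move=> P ik h0 h1 h2; have [Ha _ _] := P.
apply: (X_noP3 h0 h1 h2 (Ha i _) (Ha i.+1 _)); try arith.
by rewrite (ipath_neq P) //; arith.
Qed.

Lemma even_pair_XY x y : x \in X -> y \in Y -> santi x y -> single_Y y ->
  even_pair th x y.
Proof.
move=> xX yY sxy ysing; apply: even_pairP => // q k P q0 qk; apply/negP => ok.
have [Ha Hn _] := P.
have k3 : 3 <= k by apply: (ipath_odd_ge3 P) => //; rewrite q0 qk.
have nearY i : 0 < i < k -> q i \in Y -> i.+1 = k.
  move=> /andP[i0 ik] qiY; apply/esym/(ipath_chord P ik (leqnn k)).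
  by rewrite qk ysing // -qk (ipath_neq P) //; arith.
have q1X : q 1 \in X.
  by case: (in_XorY (q 1)) => // /(nearY 1 ltac:(arith)) k2; arith.
case: (in_XorY (q 2)) => [q2X|q2Y].
  by apply: (ipath_noX3 (i := 0) P); rewrite ?q0 //; arith.
have k3' : k = 3 by rewrite -(nearY 2 ltac:(arith) q2Y).
have xq1 : adj x (q 1) by rewrite -q0 Ha //; arith.
have q1y : adj (q 1) y by rewrite (cross_edge yY xX q1X xq1) (santi_nadj sxy).
by move: (Hn 1 k ltac:(arith) (leqnn k)); rewrite qk; apply/negP; apply: XY_adj.
Qed.

Lemma even_pair_YY a b : a \in Y -> b \in Y -> santi a b -> stable_X ->
  even_pair th a b.
Proof.
move=> aY bY sab Xst; apply: even_pairP => // q k P q0 qk; apply/negP => ok.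
have [Ha Hn _] := P.
have k3 : 3 <= k by apply: (ipath_odd_ge3 P) => //; rewrite q0 qk.
have q1X : q 1 \in X.
  case: (in_XorY (q 1)) => // q1Y; case: (Y_noP3 q1Y bY aY).
  - by rewrite -qk Hn //; arith.
  - by rewrite anti_sym santi_anti.
  - by rewrite -q0 (ipath_neq P) //; arith.
case: (in_XorY (q 2)) => [q2X|q2Y].
  by move: (Xst _ _ q1X q2X); rewrite Ha //; arith.
case: (Y_noP3 q2Y aY bY _ (santi_anti sab)).
- by rewrite -q0 anti_sym Hn //; arith.
- by rewrite -qk (ipath_neq P) //; arith.
Qed.

Lemma even_pair_XY_antiedge x a b : x \in X -> a \in Y -> b \in Y -> anti a b ->
  santi x a -> (forall c, c \in Y -> c != a -> c != b -> adj x c) ->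
  even_pair th x a.
Proof.
move=> xX aY bY ab sxa xY; apply: even_pairP => // q k P q0 qk; apply/negP => ok.
have [Ha Hn _] := P.
have k3 : 3 <= k by apply: (ipath_odd_ge3 P) => //; rewrite q0 qk.
have k4 : k != 4 by apply: contraTneq ok => ->.
have xb : adj x b by rewrite (cross_antiedge xX aY bY ab) (santi_nadj sxa).
have interiorY i : 0 < i < k -> q i \in Y -> i = 1 /\ q i = b.
  move=> /andP[i0 ik] qiY.
  have qib : q i = b.
    apply/eqP; apply: contraT => qib.
    have qia : q i != a by rewrite -qk (ipath_neq P) //; arith.
    have i1 : i = 1.
      by apply: (ipath_chord P i0 (ltnW ik)); rewrite q0 XY_adj ?xY.
    have : ~~ anti (q i) a by apply/negP => qia'; apply: (Y_noP3 qiY aY bY qia' ab qib).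
    by rewrite -qk => /(ipath_chord P ik (leqnn k)); arith.
  split=> //; apply: (ipath_chord P i0 (ltnW ik)).
  by rewrite q0 qib XY_adj.
have interiorX i : 1 < i < k -> q i \in X.
  move=> /andP[i1 ik]; case: (in_XorY (q i)) => // qiY.
  by have [? _] := interiorY i ltac:(arith) qiY; arith.
case: (in_XorY (q 1)) => [q1X|q1Y].
  by apply: (ipath_noX3 (i := 0) P _ _ q1X (interiorX 2 _)); rewrite ?q0 //; arith.
have [_ q1b] := interiorY 1 ltac:(arith) q1Y.
case: (ltngtP k 3) => [|k5|k3']; first arith.
  by apply: (ipath_noX3 (i := 2) P); try apply: interiorX; arith.
have q2a : adj (q 2) a by rewrite -qk k3' Ha.
have := cross_antiedge (interiorX 2 ltac:(arith)) aY bY ab.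
by rewrite q2a -q1b adj_sym Ha //; arith.
Qed.

Lemma even_pair_XX u v : u \in X -> v \in X -> santi u v ->
  (forall c, c \in Y -> adj u c = adj v c) -> even_pair th u v.
Proof.
move=> uX vX suv uvY; apply: even_pairP => // q k P q0 qk; apply/negP => ok.
have [Ha Hn _] := P.
have k3 : 3 <= k by apply: (ipath_odd_ge3 P) => //; rewrite q0 qk.
have k4 : k != 4 by apply: contraTneq ok => ->.
have k1 : 0 < k.-1 by arith.
have uq1 : adj u (q 1) by rewrite -q0 Ha //; arith.
have qv : adj v (q k.-1).
  have kS : k.-1.+1 = k by arith.
  by rewrite -qk adj_sym -{2}kS Ha //; arith.
have q1X : q 1 \in X.
  case: (in_XorY (q 1)) => // q1Y.
  have : ~~ anti (q 1) (q k) by rewrite qk anti_sym XY_adj // -uvY.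
  by move/(ipath_chord P (ltnW k3) (leqnn k)); arith.
have qkX : q k.-1 \in X.
  case: (in_XorY (q k.-1)) => // qY.
  have : ~~ anti (q 0) (q k.-1) by rewrite q0 XY_adj // uvY.
  by move/(ipath_chord P k1 (leq_pred k)); arith.
have q2Y : q 2 \in Y.
  case: (in_XorY (q 2)) => // q2X.
  by case: (ipath_noX3 (i := 0) P); rewrite ?q0 //; arith.
have vq2 : ~~ adj v (q 2) by rewrite -uvY // XY_anti // -q0 Hn //; arith.
have q2q : adj (q k.-1) (q 2) by rewrite (cross_edge q2Y vX qkX qv) vq2.
have := XY_adj qkX q2Y q2q; rewrite anti_sym.
case: (ltngtP 2 k.-1) => [k5|k2|k3'].
- by move/(ipath_chord P k5 (leq_pred k)); arith.
- arith.
- by move: q2Y; rewrite k3' => /(notXY qkX).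
Qed.

Lemma semi_side a b : semi a b -> (a \in X -> b \in X) /\ (a \in Y -> b \in Y).
Proof.
move=> sab; split=> h; case: (in_XorY b) => // hb.
- by move: (XY_nsemi h hb); rewrite sab.
- by move: (XY_nsemi hb h); rewrite semi_sym sab.
Qed.

(* Every vertex has at most one switchable neighbour: two of them would give a
   path on three vertices in X or an antipath on three vertices in Y. *)
Lemma semi_unique p q z : semi p q -> semi p z -> z = q.
Proof.
move=> spq spz; apply/eqP; apply: contraT => zq; exfalso.
have [qX qY] := semi_side spq; have [zX zY] := semi_side spz.
case: (in_XorY p) => hp.
- by apply: (X_noP3 (zX hp) hp (qX hp) _ (semi_adj spq) zq); rewrite adj_sym semi_adj.
- by apply: (Y_noP3 (zY hp) hp (qY hp) _ (semi_anti spq) zq); rewrite anti_sym semi_anti.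
Qed.

Lemma scomp_semi p q : semi p q -> scomp th p = [set p; q].
Proof.
move=> spq; have sqp : semi q p by rewrite semi_sym.
have closed_pq : closed semi [set p; q].
  have step a b : semi a b -> a \in [set p; q] -> b \in [set p; q].
    move=> sab; rewrite !inE => /orP[] /eqP ea; subst a.
    + by rewrite (semi_unique spq sab) eqxx orbT.
    + by rewrite (semi_unique sqp sab) eqxx.
  by move=> a b sab; apply/idP/idP; apply: step; rewrite // semi_sym.
apply/setP => z; rewrite inE; apply/idP/idP.
- by move/(closed_connect closed_pq) <-; rewrite !inE eqxx.
- by rewrite !inE => /orP[] /eqP ->; [exact: connect0 | exact: connect1].
Qed.

Lemma nedges_semi p q : semi p q -> nedges th (scomp th p) = 1.
Proof.
move=> spq; rewrite /nedges (scomp_semi spq).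
have -> : [set e : T * T | (e.1 \in [set p; q]) && (e.2 \in [set p; q]) && semi e.1 e.2]
    = [set (p, q); (q, p)].
  apply/setP => [[a b]]; rewrite !inE /=; apply/idP/idP.
  - case/andP=> /andP[/orP[] /eqP -> /orP[] /eqP ->] s; rewrite ?eqxx ?orbT //;
      by move: (semi_neq s); rewrite eqxx.
  - by case/orP=> /eqP [-> ->]; rewrite !eqxx ?orbT // semi_sym.
by rewrite cards2 xpair_eqE (negbTE (semi_neq spq)).
Qed.

Lemma Dset_semi p q z : inF th -> semi p q -> z \in Dset th -> z \in [set p; q].
Proof.
move=> [_ [swc_unique _]] spq /in_Dset [w szw].
have swc x y : semi x y -> swcomp th (scomp th x).
  move=> sxy; exists x; split=> //.
  have : x \in Dset th by apply/in_Dset; exists y.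
  by rewrite inE.
by rewrite -(scomp_semi spq) (swc_unique _ _ (swc p q spq) (swc z w szw)) inE connect0.
Qed.

Lemma antihole6_XY_adj x x' a b c d : x \in X -> x' \in X -> adj x x' ->
  a \in Y -> b \in Y -> c \in Y -> d \in Y -> anti a b -> anti c d ->
  c != a -> c != b -> d != a -> d != b -> adj x a -> adj x c -> has_antihole th 6.
Proof.
move=> xX x'X xx' aY bY cY dY ab cd ca cb da db xa xc.
have xb : ~~ adj x b by rewrite (cross_antiedge xX aY bY ab) xa.
have xd : ~~ adj x d by rewrite (cross_antiedge xX cY dY cd) xc.
have x'b : adj x' b by rewrite (cross_edge bY xX x'X xx') xb.
have x'd : adj x' d by rewrite (cross_edge dY xX x'X xx') xd.
have x'a : ~~ adj x' a by rewrite (cross_edge aY xX x'X xx') xa.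
have x'c : ~~ adj x' c by rewrite (cross_edge cY xX x'X xx') xc.
have Yadj s t u : s \in Y -> t \in Y -> u \in Y -> anti s t -> u != s -> u != t ->
    adj t u.
  move=> sY tY uY st us ut; apply: nanti_adj; first by rewrite eq_sym.
  by apply/negP => tu; apply: (Y_noP3 sY tY uY st tu); rewrite eq_sym.
have ba : anti b a by rewrite anti_sym.
apply: (antihole6 (x := x) (b := b) (a := a) (x' := x') (c := c) (d := d)) => //.
- by apply: nadj_anti => //; apply: XY_neq.
- by apply: nadj_anti => //; apply: XY_neq.
- by rewrite adj_sym.
- exact: (Yadj a b c).
- exact: (Yadj a b d).
- by apply: nadj_anti; rewrite 1?adj_sym // eq_sym XY_neq.
- exact: (Yadj b a c).
- exact: (Yadj b a d).
- by apply: nadj_anti => //; apply: XY_neq.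
Qed.

Lemma antihole6_XY x x' a b c d : x \in X -> x' \in X -> adj x x' ->
  a \in Y -> b \in Y -> c \in Y -> d \in Y -> anti a b -> anti c d ->
  c != a -> c != b -> has_antihole th 6.
Proof.
move=> xX x'X xx' aY bY cY dY ab cd ca cb.
have da : d != a by apply/eqP => e; subst d; apply: (Y_noP3 cY aY bY cd ab cb).
have db : d != b.
  by apply/eqP => e; subst d; apply: (Y_noP3 cY bY aY cd _ ca); rewrite anti_sym.
have ba : anti b a by rewrite anti_sym.
have dc : anti d c by rewrite anti_sym.
have xb : adj x b = ~~ adj x a by apply: cross_antiedge.
have xd : adj x d = ~~ adj x c by apply: cross_antiedge.
case xa: (adj x a); case xc: (adj x c); move: xb xd; rewrite xa xc => xb xd.
- exact: (antihole6_XY_adj xX x'X xx' aY bY cY dY ab cd ca cb da db).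
- exact: (antihole6_XY_adj xX x'X xx' aY bY dY cY ab dc da db ca cb).
- exact: (antihole6_XY_adj xX x'X xx' bY aY cY dY ba cd cb ca db da).
- exact: (antihole6_XY_adj xX x'X xx' bY aY dY cY ba dc db da cb ca).
Qed.

Definition strong_antiedge_Y : Prop := exists a b, [/\ a \in Y, b \in Y & santi a b].

(* T|Y has at most one anticomponent with two vertices: every vertex of Y
   outside an antiedge ab of Y is alone in its anticomponent. *)
Definition one_antiedge_Y : Prop := forall a b c, a \in Y -> b \in Y -> c \in Y ->
  anti a b -> c != a -> c != b -> single_Y c.

(* Unless Y has a strong antiedge while X is stable, two disjoint antiedges of
   Y give either an antihole of length six (if X has an edge) or two distinct
   switchable components (otherwise). *)
Lemma one_antiedge_YP : inF th -> ~ has_antihole th 6 ->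
  ~ (strong_antiedge_Y /\ stable_X) -> one_antiedge_Y.
Proof.
move=> F nah nYX a b c aY bY cY ab ca cb d dY dc; apply/negP => adc.
have cd : anti c d by rewrite anti_sym.
case: (classic stable_X) => [Xst|nXst]; last first.
  apply: nah; apply: NNPP => noah; apply: nXst => x z xX zX.
  by apply/negP => xz; apply: noah; apply: (antihole6_XY xX zX xz aY bY cY dY ab cd).
have nsY s t : s \in Y -> t \in Y -> ~~ santi s t.
  by move=> sY tY; apply/negP => st; apply: nYX; split=> //; exists s, t.
have sab : semi a b by apply: anti_semi => //; apply: nsY.
have scd : semi c d by apply: anti_semi => //; apply: nsY.
have /(Dset_semi F sab) : c \in Dset th by apply/in_Dset; exists d.
by rewrite !inE (negbTE ca) (negbTE cb).
Qed.

Section OneAntiedge.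
Hypothesis oneY : one_antiedge_Y.

Lemma even_pair_from_XY x y : x \in X -> y \in Y -> santi x y ->
  exists2 y', y' \in Y & even_pair th x y'.
Proof.
move=> xX yY sxy.
case: (classic (exists y', [/\ y' \in Y, single_Y y' & santi x y'])).
  by move=> [y' [y'Y y'single sxy']]; exists y' => //; apply: even_pair_XY.
move=> nosingle; exists y => //.
have [b [bY by_ ab]] : exists b, [/\ b \in Y, b != y & anti b y].
  apply: NNPP => nob; apply: nosingle; exists y; split=> // c cY cy.
  by apply/negP => cy'; apply: nob; exists c.
apply: (even_pair_XY_antiedge xX yY bY _ sxy); first by rewrite anti_sym.
move=> c cY cy cb; apply: contraT => xc; case: nosingle; exists c; split=> //.
- by apply: (oneY yY bY cY); rewrite // anti_sym.
- exact: XY_santi.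
Qed.

Lemma even_pair_off_D_X p q r : inF th -> semi p q -> p \in X -> r \in X ->
  ~ clique th (~: (Dset th :|: nbhd th r)) -> even_pair_off_D.
Proof.
move=> F spq pX rX nc.
have DX z : z \in Dset th -> z \in X.
  by move/(Dset_semi F spq); rewrite !inE => /orP[] /eqP ->; [|apply: (semi_side spq).1].
have YnD y : y \in Y -> y \notin Dset th by move=> yY; apply/negP => /DX /notXY; apply.
case: (classic (exists x y, [/\ x \in X, x \notin Dset th, y \in Y & santi x y])).
  move=> [x [y [xX xD yY sxy]]]; have [y' y'Y e] := even_pair_from_XY xX yY sxy.
  by exists x, y'; rewrite xD YnD.
move=> noXY.
have XYadj x y : x \in X -> x \notin Dset th -> y \in Y -> adj x y.
  move=> xX xD yY; apply: contraT => xy; case: noXY; exists x, y; split=> //.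
  exact: XY_santi.
have [s [t [sD tD rs rt st]]] := nonclique_off_D nc.
case: (in_XorY s) => sX; case: (in_XorY t) => tX.
- exists s, t; split; last by split.
  by apply: even_pair_XX => // c cY; rewrite !XYadj.
- by case: noXY; exists s, t.
- by case: noXY; exists t, s; rewrite santi_sym.
- by move: (cross_antiedge rX sX tX (santi_anti st)); rewrite (negbTE rt) (negbTE rs).
Qed.

Lemma even_pair_off_D_Y r r' : inF th -> semi r r' -> r \in Y ->
  ~ clique th (~: (Dset th :|: nbhd th r)) -> even_pair_off_D.
Proof.
move=> F srr' rY nc.
have r'Y := (semi_side srr').2 rY.
have rr' := semi_anti srr'.
have rD : r \in Dset th by apply/in_Dset; exists r'.
have r'D : r' \in Dset th by apply/in_Dset; exists r; rewrite semi_sym.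
have single c : c \in Y -> c != r -> c != r' -> single_Y c.
  by move=> cY; apply: oneY rY r'Y cY rr'.
have inX z : z \notin Dset th -> ~~ adj r z -> z \in X.
  move=> zD rz; case: (in_XorY z) => // zY.
  have zr : z != r by apply: contraNneq zD => ->.
  have zr' : z != r' by apply: contraNneq zD => ->.
  have rz' : ~~ anti r z by apply: (single z) => //; rewrite eq_sym.
  by move: rz; rewrite (nanti_adj _ rz') // eq_sym.
have [u [v [uD vD ru rv suv]]] := nonclique_off_D nc.
have uX := inX u uD ru; have vX := inX v vD rv.
case: (classic (exists2 y, y \in Y /\ single_Y y & santi u y || santi v y)).
  move=> [y [yY ysingle] /orP suvy].
  have yD : y \notin Dset th.
    apply/negP => /(Dset_semi F srr'); rewrite !inE => /orP[] /eqP ey; subst y.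
    - by move: (ysingle r' r'Y); rewrite eq_sym (semi_neq srr') anti_sym rr' => /(_ isT).
    - by move: (ysingle r rY (semi_neq srr')); rewrite rr'.
  case: suvy => suy; [exists u, y | exists v, y]; split; try by split.
  - exact: even_pair_XY.
  - exact: even_pair_XY.
move=> nosingle; exists u, v; split; last by split.
apply: even_pair_XX => // c cY.
case: (eqVneq c r) => [->|cr].
  by rewrite !(adj_sym _ r) (negbTE ru) (negbTE rv).
case: (eqVneq c r') => [->|cr'].
  rewrite (cross_antiedge uX rY r'Y rr') (cross_antiedge vX rY r'Y rr').
  by rewrite !(adj_sym _ r) ru rv.
have adjc w : w \in X -> ~~ santi w c -> adj w c.
  by move=> wX; apply: contraNT => wc; apply: XY_santi.
rewrite !adjc //; apply/negP => sc; apply: nosingle; exists c; rewrite ?sc ?orbT //.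
- by split=> //; apply: single.
- by split=> //; apply: single.
Qed.
End OneAntiedge.

Lemma complete_or_even_pair : inF th -> ~ has_antihole th 6 ->
  complete th \/ exists u v, even_pair th u v.
Proof.
move=> F nah.
case: (classic (strong_antiedge_Y /\ stable_X)) => [[[a [b [aY bY sab]]] Xst]|nYX].
  by right; exists a, b; apply: even_pair_YY.
have oneY := one_antiedge_YP F nah nYX.
case: (classic (exists x y, [/\ x \in X, y \in Y & santi x y])).
  move=> [x [y [xX yY sxy]]]; right.
  by have [y' _ e] := even_pair_from_XY oneY xX yY sxy; exists x, y'.
move=> noXY.
have XYadj x y : x \in X -> y \in Y -> adj x y.
  move=> xX yY; apply: contraT => xy; case: noXY; exists x, y; split=> //.
  exact: XY_santi.
case: (classic (exists u v, [/\ u \in X, v \in X & santi u v])).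
  move=> [u [v [uX vX suv]]]; right; exists u, v.
  by apply: even_pair_XX => // c cY; rewrite !XYadj.
move=> noXX; left => s t _ _ st; apply: contraT => nst.
have sst := nadj_santi st nst.
case: (in_XorY s) => sX; case: (in_XorY t) => tX.
- by case: noXX; exists s, t.
- by case: noXY; exists s, t.
- by case: noXY; exists t, s; rewrite santi_sym.
- have [x xX] : exists x, x \in X.
    apply: NNPP => noX; apply: nYX; split; first by exists s, t.
    by move=> x z xX; case: noX; exists x.
  by move: (cross_antiedge xX sX tX (santi_anti sst)); rewrite !XYadj.
Qed.

Lemma santi_Y_notD a b : a \in Y -> b \in Y -> santi a b -> a \notin Dset th.
Proof.
move=> aY bY sab; apply/negP => /in_Dset [w saw].
have wY := (semi_side saw).2 aY.
case: (eqVneq w b) => [wb|wb].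
- by move: (semi_nsanti saw); rewrite wb sab.
- by apply: (Y_noP3 wY aY bY _ (santi_anti sab) wb); rewrite anti_sym semi_anti.
Qed.

Lemma favorable_even_pair : inF th -> ~ has_antihole th 6 -> favorable th ->
  even_pair_off_D.
Proof.
move=> F nah [_ [_ [[u0 [v0 [s0 [u0D v0D]]]] Wnc]]].
case: (classic (exists p q, semi p q)) => [[p [q spq]]|nosemi]; last first.
  have noD z : z \notin Dset th.
    by apply/negP => /in_Dset [w szw]; apply: nosemi; exists z, w.
  case: (complete_or_even_pair F nah) => [Tc|[u [v e]]]; last by exists u, v; rewrite !noD.
  by move: (Tc u0 v0 (in_setT _) (in_setT _) (santi_neq s0)); rewrite (negbTE (santi_nadj s0)).
case: (classic (strong_antiedge_Y /\ stable_X)) => [[[a [b [aY bY sab]]] Xst]|nYX].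
  exists a, b; split; first exact: even_pair_YY.
  by rewrite (santi_Y_notD aY bY sab) (santi_Y_notD bY aY) // santi_sym.
have oneY := one_antiedge_YP F nah nYX.
have [qX qY] := semi_side spq.
have sqp : semi q p by rewrite semi_sym.
case: (in_XorY p) => pX; case: (Wnc p q spq (nedges_semi spq)).
- exact: (even_pair_off_D_X oneY F spq pX pX).
- exact: (even_pair_off_D_X oneY F spq pX (qX pX)).
- exact: (even_pair_off_D_Y oneY F spq pX).
- exact: (even_pair_off_D_Y oneY F sqp (qY pX)).
Qed.

End GoodPartition.
End Trigraph.

Theorem theorem4p11 (T : finType) (th : T -> T -> adjv)
  (th_sym : forall u v, th u v = th v u) :
  inF th -> doubled th -> ~ has_antihole th 6 ->
  (complete th \/ exists u v, even_pair th u v) /\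
  (favorable th ->
     exists u v, even_pair th u v /\ u \notin Dset th /\ v \notin Dset th).
Proof.
move=> F [X [Y gp]] nah; split.
- exact: (complete_or_even_pair th_sym gp F nah).
- exact: (favorable_even_pair th_sym gp F nah).
Qed.
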